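(* Let $F(x)$ be a quantifier-free formula and let $\mathbf c$ be a nonempty finite set of object constants containing every object constant occurring in $F(x)$. (a) If $x$ is positively weakly restricted in $F(x)$, then $\neg\mathit{in}_{\mathbf c}(x)\rightarrow(F(x)\leftrightarrow\top)$ is derivable from $\mathit{SPP}_{\mathbf c}$ in $\mathbf{INT}^=$. (b) If $x$ is negatively weakly restricted in $F(x)$, then $\neg\mathit{in}_{\mathbf c}(x)\rightarrow(F(x)\leftrightarrow\bot)$ is derivable from $\mathit{SPP}_{\mathbf c}$ in $\mathbf{INT}^=$.
   Context: Formulas are first-order formulas with object constants, predicate constants and equality, but no function constants of arity $>0$; primitive connectives $\bot,\land,\lor,\rightarrow$; $\neg G$ is $G\rightarrow\bot$, $\top$ is $\bot\rightarrow\bot$, $G\leftrightarrow H$ is $(G\rightarrow H)\land(H\rightarrow G)$. Restricted variables: for quantifier-free $G$, $\mathrm{RV}(G)$ is: $\emptyset$ if $G$ is an equality between two variables; the set of variables of $G$ if $G$ is any other atomic formula; $\mathrm{RV}(\bot)=\emptyset$; $\mathrm{RV}(G\land H)=\mathrm{RV}(G)\cup\mathrm{RV}(H)$; $\mathrm{RV}(G\lor H)=\mathrm{RV}(G)\cap\mathrm{RV}(H)$; $\mathrm{RV}(G\rightarrow H)=\emptyset$. Simplification transformations: $\neg\bot\mapsto\top$, $\neg\top\mapsto\bot$; $\bot\land G\mapsto\bot$, $G\land\bot\mapsto\bot$, $\top\land G\mapsto G$, $G\land\top\mapsto G$; $\bot\lor G\mapsto G$, $G\lor\bot\mapsto G$,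 $\top\lor G\mapsto\top$, $G\lor\top\mapsto\top$; $\bot\rightarrow G\mapsto\top$, $G\rightarrow\top\mapsto\top$, $\top\rightarrow G\mapsto G$. A variable $x$ is positively (resp. negatively) weakly restricted in a quantifier-free formula $G$ if the formula obtained from $G$ by first replacing every atomic formula $A$ of $G$ with $x\in\mathrm{RV}(A)$ by $\bot$ and then applying the simplification transformations is $\top$ (resp. $\bot$). For a finite set $\mathbf c$ of object constants, $\mathit{in}_{\mathbf c}(x_1,\dots,x_m)$ is $\bigwedge_{1\le j\le m}\bigvee_{c\in\mathbf c}x_j=c$, and $\mathit{SPP}_{\mathbf c}$ is the conjunction of the sentences $\forall\mathbf x(p_i(\mathbf x)\rightarrow\mathit{in}_{\mathbf c}(\mathbf x))$ over all predicate constants $p_i$ occurring in $F(x)$. $\mathbf{INT}^=$ is intuitionistic predicate logic with equality. *)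

From Stdlib Require Import List Arith Bool.
Import ListNotations.

(* Terms: variables (de Bruijn indices) and object constants; no function constants. *)
Inductive term : Type :=
| tvar (n : nat)
| tconst (c : nat).

(* Formulas.  A predicate constant is identified by its name together with its
   arity (= length of the argument list). *)
Inductive form : Type :=
| fbot
| fatom (p : nat) (args : list term)
| feq (t s : term)
| fand (a b : form)
| for_ (a b : form)
| fimp (a b : form)
| fall (a : form)
| fex (a : form).

Definition ftop : form := fimp fbot fbot.
Definition fneg (a : form) : form := fimp a fbot.
Definition fiff (a b : form) : form := fand (fimp a b) (fimp b a).

Fixpoint big_and (l : list form) : form :=
  match l with
  | [] => ftop
  | [a] => a
  | a :: l' => fand a (big_and l')
  end.

Fixpoint big_or (l : list form) : form :=
  match l with
  | [] => fbot
  | [a] => a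
  | a :: l' => for_ a (big_or l')
  end.

Definition subst_term (s : nat -> term) (t : term) : term :=
  match t with tvar n => s n | tconst c => tconst c end.

Definition shift : nat -> term := fun n => tvar (S n).

Definition up (s : nat -> term) : nat -> term :=
  fun n => match n with 0 => tvar 0 | S m => subst_term shift (s m) end.

Definition scons (t : term) (s : nat -> term) : nat -> term :=
  fun n => match n with 0 => t | S m => s m end.

Fixpoint subst (s : nat -> term) (f : form) : form :=
  match f with
  | fbot => fbot
  | fatom p args => fatom p (map (subst_term s) args)
  | feq t u => feq (subst_term s t) (subst_term s u)
  | fand a b => fand (subst s a) (subst s b)
  | for_ a b => for_ (subst s a) (subst s b)
  | fimp a b => fimp (subst s a) (subst s b)
  | fall a => fall (subst (up s) a)
  | fex a => fex (subst (up s) a)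
  end.

Inductive prv : list form -> form -> Prop :=
| Ctx G a : In a G -> prv G a
| ImpI G a b : prv (a :: G) b -> prv G (fimp a b)
| ImpE G a b : prv G (fimp a b) -> prv G a -> prv G b
| BotE G a : prv G fbot -> prv G a
| AndI G a b : prv G a -> prv G b -> prv G (fand a b)
| AndE1 G a b : prv G (fand a b) -> prv G a
| AndE2 G a b : prv G (fand a b) -> prv G b
| OrI1 G a b : prv G a -> prv G (for_ a b)
| OrI2 G a b : prv G b -> prv G (for_ a b)
| OrE G a b c : prv G (for_ a b) -> prv (a :: G) c -> prv (b :: G) c -> prv G c
| AllI G a : prv (map (subst shift) G) a -> prv G (fall a)
| AllE G a t : prv G (fall a) -> prv G (subst (scons t tvar) a)
| ExI G a t : prv G (subst (scons t tvar) a) -> prv G (fex a)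
| ExE G a b : prv G (fex a) -> prv (a :: map (subst shift) G) (subst shift b) -> prv G b
| EqRefl G t : prv G (feq t t)
| EqElim G a t u : prv G (feq t u) -> prv G (subst (scons t tvar) a) ->
                   prv G (subst (scons u tvar) a).

Fixpoint qf (f : form) : Prop :=
  match f with
  | fall _ | fex _ => False
  | fand a b | for_ a b | fimp a b => qf a /\ qf b
  | _ => True
  end.

Definition term_consts (t : term) : list nat :=
  match t with tvar _ => [] | tconst c => [c] end.
Definition term_vars (t : term) : list nat :=
  match t with tvar n => [n] | tconst _ => [] end.

Fixpoint consts (f : form) : list nat :=
  match f with
  | fbot => []
  | fatom _ args => flat_map term_consts args
  | feq t u => term_consts t ++ term_consts u
  | fand a b | for_ a b | fimp a b => consts a ++ consts b
  | fall a | fex a => consts a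
  end.

Fixpoint preds (f : form) : list (nat * nat) :=
  match f with
  | fatom p args => [(p, length args)]
  | fand a b | for_ a b | fimp a b => preds a ++ preds b
  | fall a | fex a => preds a
  | _ => []
  end.

(* x ∈ RV(G), for quantifier-free G *)
Fixpoint rv (x : nat) (g : form) : bool :=
  match g with
  | fbot => false
  | feq (tvar _) (tvar _) => false
  | feq t u => existsb (Nat.eqb x) (term_vars t ++ term_vars u)
  | fatom _ args => existsb (Nat.eqb x) (flat_map term_vars args)
  | fand a b => rv x a || rv x b
  | for_ a b => rv x a && rv x b
  | fimp _ _ => false
  | fall _ | fex _ => false
  end.

Fixpoint kill (x : nat) (g : form) : form :=
  match g with
  | fatom _ _ | feq _ _ => if rv x g then fbot else g
  | fand a b => fand (kill x a) (kill x b)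
  | for_ a b => for_ (kill x a) (kill x b)
  | fimp a b => fimp (kill x a) (kill x b)
  | _ => g
  end.

Definition is_bot (f : form) : bool := match f with fbot => true | _ => false end.
Definition is_top (f : form) : bool :=
  match f with fimp fbot fbot => true | _ => false end.

(* exhaustive application of the simplification transformations
   (bottom-up; yields the normal form) *)
Fixpoint simp (f : form) : form :=
  match f with
  | fand a b =>
      let a' := simp a in let b' := simp b in
      if is_bot a' || is_bot b' then fbot
      else if is_top a' then b' else if is_top b' then a' else fand a' b'
  | for_ a b =>
      let a' := simp a in let b' := simp b in
      if is_top a' || is_top b' then ftop
      else if is_bot a' then b' else if is_bot b' then a' else for_ a' b'
  | fimp a b =>
      let a' := simp a in let b' := simp b in
      if is_bot a' || is_top b' then ftop
      else if is_top a' then b' else fimp a' b'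
  | _ => f
  end.

Definition pos_weakly_restricted (x : nat) (g : form) : Prop := simp (kill x g) = ftop.
Definition neg_weakly_restricted (x : nat) (g : form) : Prop := simp (kill x g) = fbot.

Definition in1 (c : list nat) (t : term) : form :=
  big_or (map (fun a => feq t (tconst a)) c).
Definition in_c (c : list nat) (ts : list term) : form := big_and (map (in1 c) ts).

Fixpoint nall (n : nat) (f : form) : form :=
  match n with 0 => f | S m => fall (nall m f) end.

Definition spp_pred (c : list nat) (pn : nat * nat) : form :=
  let vs := map tvar (seq 0 (snd pn)) in
  nall (snd pn) (fimp (fatom (fst pn) vs) (in_c c vs)).

Definition pair_eq_dec : forall x y : nat * nat, {x = y} + {x <> y}.
Proof. decide equality; apply Nat.eq_dec. Defined.

Definition SPP (c : list nat) (F : form) : form :=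
  big_and (map (spp_pred c) (nodup pair_eq_dec (preds F))).

(** Assume ¬in_c(x) and SPP_c.  Every atom A with x ∈ RV(A) is then refutable:
    a predicate atom p(..., x, ...) yields in_c of its arguments, in particular
    in_c(x), and an equation between x and a constant a ∈ c is a disjunct of
    in_c(x).  Provable equivalence is a congruence for ∧, ∨ and →, so F is
    equivalent to the formula in which these atoms are replaced by ⊥, and every
    simplification transformation is an intuitionistic equivalence; hence F is
    equivalent to ⊤ or to ⊥ according to the normal form. *)

From Stdlib Require Import List Arith Bool Lia.
Import ListNotations.

Lemma prv_weaken G a : prv G a -> forall G', incl G G' -> prv G' a.
Proof.
  induction 1; intros G' Hincl.
  - apply Ctx; auto.
  - apply ImpI, IHprv, incl_cons; [left; reflexivity | apply incl_tl; exact Hincl].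
  - eapply ImpE; eauto.
  - apply BotE; auto.
  - apply AndI; auto.
  - eapply AndE1; eauto.
  - eapply AndE2; eauto.
  - apply OrI1; auto.
  - apply OrI2; auto.
  - eapply OrE; [eauto | apply IHprv2 | apply IHprv3];
      (apply incl_cons; [left; reflexivity | apply incl_tl; exact Hincl]).
  - apply AllI, IHprv, incl_map, Hincl.
  - apply AllE; auto.
  - eapply ExI; eauto.
  - eapply ExE; [eauto |]. apply IHprv2, incl_cons; [left; reflexivity |].
    apply incl_tl, incl_map, Hincl.
  - apply EqRefl.
  - eapply EqElim; eauto.
Qed.

Lemma prv_hyp G a : prv (a :: G) a.
Proof. apply Ctx; left; reflexivity. Qed.

Lemma prv_weaken1 G a b : prv G a -> prv (b :: G) a.
Proof. intro H; apply (prv_weaken _ _ H), incl_tl, incl_refl. Qed.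

Lemma prv_top G : prv G ftop.
Proof. apply ImpI, prv_hyp. Qed.

Lemma prv_eq_sym G t u : prv G (feq t u) -> prv G (feq u t).
Proof.
  intro H.
  destruct t as [n | a];
    [exact (EqElim _ (feq (tvar 0) (tvar (S n))) _ u H (EqRefl _ _))
    | exact (EqElim _ (feq (tvar 0) (tconst a)) _ u H (EqRefl _ _))].
Qed.

Definition peqv (G : list form) (a b : form) : Prop :=
  prv G (fimp a b) /\ prv G (fimp b a).

Lemma peqv_refl G a : peqv G a a.
Proof. split; apply ImpI, prv_hyp. Qed.

Lemma peqv_trans G a b c : peqv G a b -> peqv G b c -> peqv G a c.
Proof.
  intros [Hab Hba] [Hbc Hcb]; split; apply ImpI.
  - eapply ImpE; [apply prv_weaken1, Hbc |].
    eapply ImpE; [apply prv_weaken1, Hab | apply prv_hyp].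
  - eapply ImpE; [apply prv_weaken1, Hba |].
    eapply ImpE; [apply prv_weaken1, Hcb | apply prv_hyp].
Qed.

Lemma peqv_and G a b a' b' :
  peqv G a a' -> peqv G b b' -> peqv G (fand a b) (fand a' b').
Proof.
  intros [Ha Ha'] [Hb Hb']; split; apply ImpI; apply AndI;
    (eapply ImpE; [apply prv_weaken1; eassumption |]);
    solve [eapply AndE1; apply prv_hyp | eapply AndE2; apply prv_hyp].
Qed.

Lemma peqv_or G a b a' b' :
  peqv G a a' -> peqv G b b' -> peqv G (for_ a b) (for_ a' b').
Proof.
  intros [Ha Ha'] [Hb Hb']; split; apply ImpI; (eapply OrE; [apply prv_hyp | |]);
    [apply OrI1 | apply OrI2 | apply OrI1 | apply OrI2];
    (eapply ImpE; [apply prv_weaken1, prv_weaken1; eassumption | apply prv_hyp]).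
Qed.

Lemma peqv_imp G a b a' b' :
  peqv G a a' -> peqv G b b' -> peqv G (fimp a b) (fimp a' b').
Proof.
  intros [Ha Ha'] [Hb Hb']; split; apply ImpI, ImpI;
    (eapply ImpE; [apply prv_weaken1, prv_weaken1; eassumption |]);
    (eapply ImpE; [apply prv_weaken1, prv_hyp |]);
    (eapply ImpE; [apply prv_weaken1, prv_weaken1; eassumption | apply prv_hyp]).
Qed.

Lemma peqv_bot G a : prv G (fneg a) -> peqv G a fbot.
Proof. intro H; split; [exact H | apply ImpI, BotE, prv_hyp]. Qed.

Lemma prv_fiff G a b : peqv G a b -> prv G (fiff a b).
Proof. intros [Hab Hba]; apply AndI; assumption. Qed.

Lemma is_bot_true f : is_bot f = true -> f = fbot.
Proof. destruct f; simpl; congruence. Qed.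

Lemma is_top_true f : is_top f = true -> f = ftop.
Proof.
  intro H; destruct f; try discriminate.
  destruct f1; try discriminate; destruct f2; try discriminate; reflexivity.
Qed.

Lemma peqv_simp_and G a b :
  peqv G (fand a b)
    (if is_bot a || is_bot b then fbot
     else if is_top a then b else if is_top b then a else fand a b).
Proof.
  destruct (is_bot a) eqn:Ea; [apply is_bot_true in Ea; subst a |].
  { split; apply ImpI; [eapply AndE1, prv_hyp | apply BotE, prv_hyp]. }
  destruct (is_bot b) eqn:Eb; [apply is_bot_true in Eb; subst b |]; simpl.
  { split; apply ImpI; [eapply AndE2, prv_hyp | apply BotE, prv_hyp]. }
  destruct (is_top a) eqn:Ea'; [apply is_top_true in Ea'; subst a |].
  { split; apply ImpI; [eapply AndE2, prv_hyp | apply AndI; [apply prv_top | apply prv_hyp]]. }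
  destruct (is_top b) eqn:Eb'; [apply is_top_true in Eb'; subst b |].
  { split; apply ImpI; [eapply AndE1, prv_hyp | apply AndI; [apply prv_hyp | apply prv_top]]. }
  apply peqv_refl.
Qed.

Lemma peqv_simp_or G a b :
  peqv G (for_ a b)
    (if is_top a || is_top b then ftop
     else if is_bot a then b else if is_bot b then a else for_ a b).
Proof.
  destruct (is_top a) eqn:Ea; [apply is_top_true in Ea; subst a |].
  { split; apply ImpI; [apply prv_top | apply OrI1, prv_top]. }
  destruct (is_top b) eqn:Eb; [apply is_top_true in Eb; subst b |]; simpl.
  { split; apply ImpI; [apply prv_top | apply OrI2, prv_top]. }
  destruct (is_bot a) eqn:Ea'; [apply is_bot_true in Ea'; subst a |].
  { split; apply ImpI;
      [eapply OrE; [apply prv_hyp | apply BotE, prv_hyp | apply prv_hyp] | apply OrI2, prv_hyp]. }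
  destruct (is_bot b) eqn:Eb'; [apply is_bot_true in Eb'; subst b |].
  { split; apply ImpI;
      [eapply OrE; [apply prv_hyp | apply prv_hyp | apply BotE, prv_hyp] | apply OrI1, prv_hyp]. }
  apply peqv_refl.
Qed.

Lemma peqv_simp_imp G a b :
  peqv G (fimp a b)
    (if is_bot a || is_top b then ftop else if is_top a then b else fimp a b).
Proof.
  destruct (is_bot a) eqn:Ea; [apply is_bot_true in Ea; subst a |].
  { split; apply ImpI; [apply prv_top | apply ImpI, BotE, prv_hyp]. }
  destruct (is_top b) eqn:Eb; [apply is_top_true in Eb; subst b |]; simpl.
  { split; apply ImpI; [apply prv_top | apply ImpI, prv_top]. }
  destruct (is_top a) eqn:Ea'; [apply is_top_true in Ea'; subst a |].
  { split; apply ImpI; [eapply ImpE; [apply prv_hyp | apply prv_top] | apply ImpI, prv_weaken1, prv_hyp]. }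
  apply peqv_refl.
Qed.

Lemma peqv_simp G f : peqv G f (simp f).
Proof.
  induction f; try apply peqv_refl; eapply peqv_trans.
  - apply peqv_and; [apply IHf1 | apply IHf2].
  - apply peqv_simp_and.
  - apply peqv_or; [apply IHf1 | apply IHf2].
  - apply peqv_simp_or.
  - apply peqv_imp; [apply IHf1 | apply IHf2].
  - apply peqv_simp_imp.
Qed.

Fixpoint upn (n : nat) (s : nat -> term) : nat -> term :=
  match n with 0 => s | S m => upn m (up s) end.

Lemma subst_nall n s f : subst s (nall n f) = nall n (subst (upn n s) f).
Proof. revert s; induction n; intro s; simpl; [reflexivity | now rewrite IHn]. Qed.

Definition shiftn (n : nat) (t : term) : term :=
  match t with tvar v => tvar (n + v) | tconst a => tconst a end.

Lemma upn_eq n s i : upn n s i = if i <? n then tvar i else shiftn n (s (i - n)).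
Proof.
  revert s i; induction n; intros s i; simpl.
  - rewrite Nat.sub_0_r; destruct (s i); reflexivity.
  - rewrite IHn. destruct (Nat.ltb_spec i n), (Nat.ltb_spec i (S n)); try lia.
    + reflexivity.
    + replace i with n by lia; rewrite Nat.sub_diag; simpl; f_equal; lia.
    + replace (i - n) with (S (i - S n)) by lia; simpl.
      destruct (s (i - S n)); simpl; f_equal; lia.
Qed.

Lemma subst_ext_qf f s s' :
  qf f -> (forall i, s i = s' i) -> subst s f = subst s' f.
Proof.
  intros Hqf Hs.
  assert (Ht : forall t, subst_term s t = subst_term s' t) by (destruct t; simpl; auto).
  induction f; simpl in *; try tauto; f_equal; auto using map_ext; tauto.
Qed.

Lemma subst_subst_qf f s s' :
  qf f -> subst s (subst s' f) = subst (fun i => subst_term s (s' i)) f.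
Proof.
  intro Hqf.
  assert (Ht : forall t, subst_term s (subst_term s' t)
                         = subst_term (fun i => subst_term s (s' i)) t)
    by (destruct t; reflexivity).
  induction f; simpl in *; try tauto; f_equal; auto; try tauto.
  rewrite map_map; apply map_ext, Ht.
Qed.

Lemma subst_tvar_qf f : qf f -> subst tvar f = f.
Proof.
  intro Hqf.
  assert (Ht : forall t, subst_term tvar t = t) by (destruct t; reflexivity).
  induction f; simpl in *; try tauto; f_equal; auto; try tauto.
  rewrite <- (map_id args) at 2; apply map_ext, Ht.
Qed.

Lemma qf_subst f s : qf f -> qf (subst s f).
Proof. induction f; simpl; tauto. Qed.

(* Closes the body of [nall n f]: the bound index [i < n] becomes [sg i] and
   the free indices are lowered by [n]. *)
Definition instn (n : nat) (sg : nat -> term) (i : nat) : term :=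
  if i <? n then sg i else tvar (i - n).

Lemma instn_shiftn n sg t : subst_term (instn n sg) (shiftn n t) = t.
Proof.
  destruct t as [v |]; [| reflexivity]; unfold instn; simpl.
  destruct (Nat.ltb_spec (n + v) n); [lia | f_equal; lia].
Qed.

Lemma instn_upn n sg i :
  subst_term (instn n sg) (upn n (scons (sg n) tvar) i) = instn (S n) sg i.
Proof.
  rewrite upn_eq; unfold instn at 2.
  destruct (Nat.ltb_spec i n), (Nat.ltb_spec i (S n)); try lia.
  - unfold instn; simpl; destruct (Nat.ltb_spec i n); [reflexivity | lia].
  - replace i with n by lia; rewrite Nat.sub_diag; apply instn_shiftn.
  - replace (i - n) with (S (i - S n)) by lia; apply instn_shiftn.
Qed.

Lemma prv_nall_inst G n f sg :
  qf f -> prv G (nall n f) -> prv G (subst (instn n sg) f).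
Proof.
  revert f; induction n; intros f Hqf H.
  - rewrite (subst_ext_qf f _ tvar Hqf), subst_tvar_qf by
      (auto; intro i; unfold instn; simpl; f_equal; lia).
    exact H.
  - apply (AllE _ _ (sg n)) in H; rewrite subst_nall in H.
    apply IHn in H; [| apply qf_subst, Hqf].
    rewrite subst_subst_qf in H by exact Hqf.
    rewrite (subst_ext_qf f _ _ Hqf (instn_upn n sg)) in H; exact H.
Qed.

Lemma prv_big_and_elim G l a : prv G (big_and l) -> In a l -> prv G a.
Proof.
  induction l as [| b [| b' l] IH]; simpl; [tauto | intros H [<- | []]; exact H |].
  intros H [<- | Ha]; [eapply AndE1, H | apply IH; [eapply AndE2, H | exact Ha]].
Qed.

Lemma prv_big_or_intro G l a : In a l -> prv G a -> prv G (big_or l).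
Proof.
  induction l as [| b [| b' l] IH]; simpl; [tauto | intros [<- | []] H; exact H |].
  intros [<- | Ha] H; [apply OrI1, H | apply OrI2, IH; assumption].
Qed.

Lemma subst_big_and s l : subst s (big_and l) = big_and (map (subst s) l).
Proof.
  induction l as [| b [| b' l] IH]; [reflexivity | reflexivity |].
  change (fand (subst s b) (subst s (big_and (b' :: l)))
          = fand (subst s b) (big_and (map (subst s) (b' :: l)))).
  now rewrite IH.
Qed.

Lemma subst_big_or s l : subst s (big_or l) = big_or (map (subst s) l).
Proof.
  induction l as [| b [| b' l] IH]; [reflexivity | reflexivity |].
  change (for_ (subst s b) (subst s (big_or (b' :: l)))
          = for_ (subst s b) (big_or (map (subst s) (b' :: l)))).
  now rewrite IH.
Qed.

Lemma qf_big_and l : Forall qf l -> qf (big_and l).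
Proof.
  induction l as [| b [| b' l] IH]; simpl; [tauto | now inversion 1 |].
  inversion 1; split; auto.
Qed.

Lemma qf_big_or l : Forall qf l -> qf (big_or l).
Proof.
  induction l as [| b [| b' l] IH]; simpl; [tauto | now inversion 1 |].
  inversion 1; split; auto.
Qed.

Lemma subst_in_c s c ts : subst s (in_c c ts) = in_c c (map (subst_term s) ts).
Proof.
  unfold in_c, in1; rewrite subst_big_and, !map_map; f_equal.
  apply map_ext; intro t; rewrite subst_big_or, map_map; reflexivity.
Qed.

Lemma qf_in_c c ts : qf (in_c c ts).
Proof.
  apply qf_big_and, Forall_map, Forall_forall; intros t _.
  apply qf_big_or, Forall_map, Forall_forall; intros a _; exact I.
Qed.

Lemma map_nth_seq (l : list term) d : map (fun i => nth i l d) (seq 0 (length l)) = l.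
Proof.
  induction l as [| a l IH]; [reflexivity |].
  simpl; f_equal; rewrite <- seq_shift, map_map; exact IH.
Qed.

Lemma prv_spp_pred_inst G c p args :
  prv G (spp_pred c (p, length args)) -> prv G (fimp (fatom p args) (in_c c args)).
Proof.
  intro H; unfold spp_pred in H; simpl in H.
  apply (prv_nall_inst _ _ _ (fun i => nth i args (tvar 0))) in H;
    [| split; [exact I | apply qf_in_c]].
  simpl in H; rewrite subst_in_c, map_map in H.
  enough (E : map (fun i => subst_term (instn (length args) (fun i => nth i args (tvar 0))) (tvar i))
                  (seq 0 (length args)) = args) by (rewrite E in H; exact H).
  rewrite <- (map_nth_seq args (tvar 0)) at 2; apply map_ext_in.
  intros i Hi; apply in_seq in Hi; unfold instn; simpl.
  destruct (Nat.ltb_spec i (length args)); [reflexivity | lia].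
Qed.

Lemma prv_SPP_inst G c F p args :
  In (p, length args) (preds F) -> prv G (SPP c F) ->
  prv G (fimp (fatom p args) (in_c c args)).
Proof.
  intros Hp H; apply prv_spp_pred_inst.
  apply (prv_big_and_elim _ _ _ H), in_map, nodup_In, Hp.
Qed.

Lemma in_args_of_term_vars x args :
  existsb (Nat.eqb x) (flat_map term_vars args) = true -> In (tvar x) args.
Proof.
  intro H; apply existsb_exists in H as [v [Hv Hxv]]; apply Nat.eqb_eq in Hxv; subst v.
  apply in_flat_map in Hv as [[n | a] [Ht Hv]]; simpl in Hv; [| tauto].
  destruct Hv as [<- | []]; exact Ht.
Qed.

Section Refutation.

Variables (G : list form) (c : list nat) (x : nat) (P : list (nat * nat)).
Hypothesis not_in_c : prv G (fneg (in1 c (tvar x))).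
Hypothesis spp_inst :
  forall p args, In (p, length args) P -> prv G (fimp (fatom p args) (in_c c args)).

Lemma atom_refutable p args :
  In (p, length args) P -> In (tvar x) args -> prv G (fneg (fatom p args)).
Proof.
  intros Hp Hx; apply ImpI.
  eapply ImpE; [apply prv_weaken1, not_in_c |].
  eapply prv_big_and_elim; [| apply in_map, Hx].
  eapply ImpE; [apply prv_weaken1, spp_inst, Hp | apply prv_hyp].
Qed.

Lemma var_eq_const_refutable a : In a c -> prv G (fneg (feq (tvar x) (tconst a))).
Proof.
  intro Ha; apply ImpI.
  eapply ImpE; [apply prv_weaken1, not_in_c |].
  eapply prv_big_or_intro; [apply in_map, Ha | apply prv_hyp].
Qed.

Lemma const_eq_var_refutable a : In a c -> prv G (fneg (feq (tconst a) (tvar x))).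
Proof.
  intro Ha; apply ImpI.
  eapply ImpE; [apply prv_weaken1, var_eq_const_refutable, Ha |].
  apply prv_eq_sym, prv_hyp.
Qed.

Lemma peqv_kill g :
  qf g -> incl (consts g) c -> incl (preds g) P -> peqv G g (kill x g).
Proof.
  induction g as [| p args | [n | a] [m | b] | g1 IH1 g2 IH2 | g1 IH1 g2 IH2 | g1 IH1 g2 IH2 | |];
    simpl; intros Hqf Hc Hp; try apply peqv_refl; try tauto.
  - destruct (existsb (Nat.eqb x) (flat_map term_vars args)) eqn:E; [| apply peqv_refl].
    apply peqv_bot, atom_refutable; [apply Hp; left; reflexivity |].
    apply in_args_of_term_vars, E.
  - destruct (Nat.eqb x n) eqn:E; simpl; [| apply peqv_refl].
    apply Nat.eqb_eq in E; subst n.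
    apply peqv_bot, var_eq_const_refutable, Hc; left; reflexivity.
  - destruct (Nat.eqb x m) eqn:E; simpl; [| apply peqv_refl].
    apply Nat.eqb_eq in E; subst m.
    apply peqv_bot, const_eq_var_refutable, Hc; left; reflexivity.
  - apply incl_app_inv in Hc, Hp; apply peqv_and; [apply IH1 | apply IH2]; tauto.
  - apply incl_app_inv in Hc, Hp; apply peqv_or; [apply IH1 | apply IH2]; tauto.
  - apply incl_app_inv in Hc, Hp; apply peqv_imp; [apply IH1 | apply IH2]; tauto.
Qed.

End Refutation.

Theorem lemma7 (F : form) (x : nat) (c : list nat) :
  qf F -> c <> [] -> (forall a, In a (consts F) -> In a c) ->
  (pos_weakly_restricted x F ->
     prv [SPP c F] (fimp (fneg (in_c c [tvar x])) (fiff F ftop))) /\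
  (neg_weakly_restricted x F ->
     prv [SPP c F] (fimp (fneg (in_c c [tvar x])) (fiff F fbot))).
Proof.
  intros Hqf _ Hc.
  set (G := fneg (in_c c [tvar x]) :: [SPP c F]).
  assert (HF : peqv G F (simp (kill x F))).
  { eapply peqv_trans; [apply (peqv_kill G c x (preds F)) | apply peqv_simp].
    - apply prv_hyp.
    - intros p args Hp; apply (prv_SPP_inst _ _ F), prv_weaken1, prv_hyp; exact Hp.
    - exact Hqf.
    - exact Hc.
    - apply incl_refl. }
  unfold pos_weakly_restricted, neg_weakly_restricted.
  split; intro E; rewrite E in HF; apply ImpI, prv_fiff, HF.
Qed.
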